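(* For every positive integer $m$ there exist real coefficients $d_{m}(\alpha)$, $\alpha\subseteq[n]$ with $|\alpha|\le m$ (independent of the state), such that for every $n$-qubit pure state $\ket{\psi}$, $\sum_{\mathbf{z}\in\{0,1\}^n}w(\mathbf{z})^m p_\psi(\mathbf{z})=\sum_{\alpha\subseteq[n],\,|\alpha|\le m}d_m(\alpha)\,\mathrm{Tr}[\rho_\alpha^2]$. That is, the $m$-th moment of the number of Bell pairs generated in the parallelized SWAP test is a function only of the purities of the reduced states on at most $m$ qubits.
   Context: With $\mathbb{F}^{(i)}$ the swap of the $i$-th qubits of two copies of $\ket{\psi}$, $p_\psi(\mathbf{z})=\mathrm{Tr}\big[\big(\bigotimes_{i=1}^n\tfrac12(\mathbb{1}+(-1)^{z_i}\mathbb{F}^{(i)})\big)(\ket{\psi}\!\bra{\psi})^{\otimes 2}\big]$ is the outcome distribution of the parallelized controlled-SWAP test; $w(\mathbf{z})$ is the Hamming weight (number of Bell pairs produced); $\rho_\alpha$ is the reduced state on qubits $\alpha$, with $\mathrm{Tr}[\rho_\emptyset^2]=1$. *)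

(* Amplitudes live in an arbitrary numClosedFieldType C
   (e.g. the complex numbers); conjugation is z^*. *)
From HB Require Import structures.
From mathcomp Require Import all_boot all_order all_algebra.
Set Implicit Arguments. Unset Strict Implicit. Unset Printing Implicit Defensive.
Import Order.TTheory GRing.Theory Num.Theory.
Local Open Scope ring_scope.

Notation bits n := {ffun 'I_n -> bool}.

(* an n-qubit (unnormalised) state vector: amplitudes in the computational basis *)
Definition qstate (C : numClosedFieldType) (n : nat) := bits n -> C.

Definition normalized (C : numClosedFieldType) (n : nat) (psi : qstate C n) : Prop :=
  \sum_(x : bits n) psi x * (psi x)^* = 1.

(* matrix element <a' b'| 1/2 (1 + (-1)^zi F) |a b> of the single-qubit-pair
   projector of the controlled-SWAP test, F = swap of the two qubits *)
Definition swap_factor (C : numClosedFieldType) (zi a' b' a b : bool) : C :=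
  2^-1 * (((a' == a) && (b' == b))%:R + (-1) ^+ zi * ((a' == b) && (b' == a))%:R).

(* p_psi(z) = Tr[(tensor_i 1/2(1 + (-1)^{z_i} F^(i))) (|psi><psi|)^{tensor 2}]
            = <psi psi| P_z |psi psi>, written in the computational basis
   (copy 1 index x, copy 2 index y). *)
Definition pswap (C : numClosedFieldType) (n : nat) (psi : qstate C n) (z : bits n) : C :=
  \sum_(x' : bits n) \sum_(y' : bits n) \sum_(x : bits n) \sum_(y : bits n)
    (psi x')^* * (psi y')^* *
    (\prod_(i < n) swap_factor C (z i) (x' i) (y' i) (x i) (y i)) *
    psi x * psi y.

Definition hweight (n : nat) (z : bits n) : nat := #|[set i | z i]|.

(* configurations on the qubits of alpha are encoded as bit strings vanishing
   outside alpha *)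
Definition supported (n : nat) (alpha : {set 'I_n}) (x : bits n) : bool :=
  [forall i, (i \notin alpha) ==> ~~ x i].

Definition merge (n : nat) (alpha : {set 'I_n}) (a b : bits n) : bits n :=
  [ffun i => if i \in alpha then a i else b i].

(* reduced density matrix rho_alpha = Tr_{[n]\alpha} |psi><psi| *)
Definition rho (C : numClosedFieldType) (n : nat) (psi : qstate C n)
    (alpha : {set 'I_n}) (a a' : bits n) : C :=
  \sum_(b : bits n | supported (~: alpha) b)
     psi (merge alpha a b) * (psi (merge alpha a' b))^*.

Definition purity (C : numClosedFieldType) (n : nat) (psi : qstate C n)
    (alpha : {set 'I_n}) : C :=
  \sum_(a : bits n | supported alpha a) \sum_(a' : bits n | supported alpha a')
     rho psi alpha a a' * rho psi alpha a' a.

(* Per qubit pair, 1/2 (1 + (-1)^z_i F^(i)) expands over the set alpha of qubits on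
   which the swap is taken: p_psi(z) = 2^-n sum_alpha (-1)^|z & alpha| <psi psi|F_alpha|psi psi>,
   and by the swap trick <psi psi|F_alpha|psi psi> = Tr[rho_alpha^2].  The m-th moment is thus
   sum_alpha d(alpha) Tr[rho_alpha^2] with d(alpha) = 2^-n sum_z w(z)^m (-1)^|z & alpha|.
   Expanding w(z)^m = (sum_i z_i)^m, each monomial involves at most m coordinates; toggling a
   coordinate of alpha that it misses flips the sign of the summand, so d(alpha) = 0 once
   |alpha| > m. *)

From Pilot Require Import Defs.
From HB Require Import structures.
From mathcomp Require Import all_boot all_order all_algebra ring.
Import Order.TTheory GRing.Theory Num.Theory.
Local Open Scope ring_scope.

Lemma sumr_delta (R : pzSemiRingType) (T : finType) (a : T) (F : T -> R) :
  \sum_x (x == a)%:R * F x = F a.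
Proof.
rewrite (bigD1 a) //= eqxx mul1r big1 ?addr0 // => x /negPf ->.
by rewrite mul0r.
Qed.

Lemma prodr_natb (R : comPzSemiRingType) (I : finType) (b : I -> bool) :
  \prod_i (b i)%:R = [forall i, b i]%:R :> R.
Proof.
case: (boolP [forall i, b i]) => [/forallP bT | /forallPn [i /negPf bi]].
  by rewrite big1 // => i _; rewrite bT.
by rewrite (bigD1 i) //= bi mul0r.
Qed.

Lemma sum_involution_eq0 (R : numDomainType) (T : finType) (h : T -> T)
    (F : T -> R) :
  involutive h -> (forall x, F (h x) = - F x) -> \sum_x F x = 0.
Proof.
move=> hK Fh; apply/eqP; have /= <- := mulrn_eq0 (\sum_x F x) 2; rewrite mulr2n.
rewrite [X in _ + X](reindex_inj (inv_inj hK)) /=.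
under [X in _ + X]eq_bigr do rewrite Fh.
by rewrite sumrN subrr.
Qed.

Lemma exchange_big2 (R : nmodType) (I J : finType) (F : I -> I -> J -> J -> R) :
  \sum_a \sum_b \sum_c \sum_d F a b c d = \sum_c \sum_d \sum_a \sum_b F a b c d.
Proof.
transitivity (\sum_a \sum_c \sum_b \sum_d F a b c d).
  by apply: eq_bigr => a _; exact: exchange_big.
rewrite exchange_big; apply: eq_bigr => c _.
transitivity (\sum_a \sum_d \sum_b F a b c d).
  by apply: eq_bigr => a _; exact: exchange_big.
exact: exchange_big.
Qed.

Section TwoCopies.

Context {n : nat}.
Implicit Types (alpha : {set 'I_n}) (x y : bits n).

Definition restrict alpha x : bits n := [ffun i => (i \in alpha) && x i].

Definition flip_bit (i0 : 'I_n) x : bits n := [ffun i => x i (+) (i == i0)].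

Lemma supported_restrict alpha x : supported alpha (restrict alpha x).
Proof. by apply/forallP => i; rewrite ffunE; case: (i \in alpha). Qed.

Lemma restrict_merge_l alpha x y :
  supported alpha x -> restrict alpha (Defs.merge alpha x y) = x.
Proof.
move=> /forallP xS; apply/ffunP => i; rewrite !ffunE.
by have := xS i; case: (i \in alpha) => //= /negPf ->.
Qed.

Lemma restrict_merge_r alpha x y :
  supported (~: alpha) y -> restrict (~: alpha) (Defs.merge alpha x y) = y.
Proof.
move=> /forallP yS; apply/ffunP => i; rewrite !ffunE inE.
by have := yS i; rewrite inE; case: (i \in alpha) => //= /negPf ->.
Qed.

Lemma merge_restrict alpha x y :
  Defs.merge alpha (restrict alpha x) (restrict (~: alpha) y) = Defs.merge alpha x y.
Proof. by apply/ffunP => i; rewrite !ffunE inE; case: (i \in alpha). Qed.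

Lemma merge_id alpha x : Defs.merge alpha x x = x.
Proof. by apply/ffunP => i; rewrite !ffunE if_same. Qed.

Lemma flip_bitK i0 : involutive (flip_bit i0).
Proof. by move=> x; apply/ffunP => i; rewrite !ffunE addbK. Qed.

Lemma flip_bit_neq i0 x i : i != i0 -> flip_bit i0 x i = x i.
Proof. by rewrite ffunE => /negPf ->; rewrite addbF. Qed.

Lemma sum_supported_pairs (R : nmodType) alpha (G : bits n -> bits n -> R) :
  \sum_(a | supported alpha a) \sum_(b | supported (~: alpha) b) G a b =
  \sum_x G (restrict alpha x) (restrict (~: alpha) x).
Proof.
rewrite pair_big (reindex (fun x => (restrict alpha x, restrict (~: alpha) x))).
  by apply: eq_bigl => x; rewrite !supported_restrict.
exists (fun p => Defs.merge alpha p.1 p.2) => [x _ | [a b] /andP[aS bS]] /=.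
  by rewrite merge_restrict merge_id.
by rewrite restrict_merge_l ?restrict_merge_r.
Qed.

Context {C : numClosedFieldType}.
Implicit Types (psi : qstate C n) (z : bits n).

Definition parity_sign alpha z : C := \prod_(i in alpha) (-1) ^+ z i.

(* <psi psi| F_alpha |psi psi>, F_alpha swapping the qubits of alpha between the two copies *)
Definition swap_expectation psi alpha : C :=
  \sum_x \sum_y (psi (Defs.merge alpha y x))^* * (psi (Defs.merge alpha x y))^*
                * psi x * psi y.

Lemma forall_eq_ffun2 x' y' x y :
  [forall i, (x' i == x i) && (y' i == y i)] = (x' == x) && (y' == y).
Proof.
apply/forallP/andP => [xy | [/eqP-> /eqP-> i]]; last by rewrite !eqxx.
by split; apply/eqP/ffunP => i; case/andP: (xy i) => /eqP ? /eqP ?.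
Qed.

Lemma prod_swap_factor z x' y' x y :
  \prod_(i < n) swap_factor C (z i) (x' i) (y' i) (x i) (y i) =
  2^-n * \sum_alpha parity_sign alpha z *
    ((x' == Defs.merge alpha y x) && (y' == Defs.merge alpha x y))%:R.
Proof.
rewrite /swap_factor; under eq_bigr do rewrite addrC.
rewrite prodrMl card_ord exprVn bigA_distr; congr (_ * _).
apply: eq_bigr => alpha _; rewrite -forall_eq_ffun2 -prodr_natb /parity_sign.
rewrite [\prod_(i in alpha) _]big_mkcond -big_split /=.
apply: eq_bigr => i _; rewrite !ffunE.
by case: (i \in alpha); rewrite ?mul1r.
Qed.

Lemma bra_prod_swap_factor psi z x y :
  \sum_x' \sum_y' (psi x')^* * (psi y')^* *
    \prod_(i < n) swap_factor C (z i) (x' i) (y' i) (x i) (y i) * psi x * psi y =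
  2^-n * \sum_alpha parity_sign alpha z *
    ((psi (Defs.merge alpha y x))^* * (psi (Defs.merge alpha x y))^* * psi x * psi y).
Proof.
under eq_bigr do under eq_bigr do rewrite prod_swap_factor !mulr_sumr !mulr_suml.
under eq_bigr do rewrite exchange_big.
rewrite exchange_big mulr_sumr; apply: eq_bigr => alpha _.
set Mx := Defs.merge alpha y x; set My := Defs.merge alpha x y.
transitivity (\sum_x' (x' == Mx)%:R * \sum_y' (y' == My)%:R *
    (2^-n * parity_sign alpha z * ((psi x')^* * (psi y')^* * psi x * psi y))).
  apply: eq_bigr => x' _; rewrite mulr_sumr; apply: eq_bigr => y' _.
  by rewrite -mulnb natrM; ring.
by rewrite sumr_delta sumr_delta -mulrA.
Qed.

Lemma pswap_expansion psi z :
  pswap psi z = 2^-n * \sum_alpha parity_sign alpha z * swap_expectation psi alpha.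
Proof.
rewrite /pswap exchange_big2.
under eq_bigr do under eq_bigr do rewrite bra_prod_swap_factor mulr_sumr.
under eq_bigr do rewrite exchange_big.
rewrite exchange_big mulr_sumr; apply: eq_bigr => alpha _.
rewrite mulrA mulr_sumr; apply: eq_bigr => x _.
rewrite mulr_sumr; apply: eq_bigr => y _.
by rewrite !mulrA.
Qed.

Lemma swap_expectation_purity psi alpha :
  swap_expectation psi alpha = purity psi alpha.
Proof.
rewrite /purity /rho.
under eq_bigr do under eq_bigr do rewrite mulr_suml.
under eq_bigr do under eq_bigr do under eq_bigr do rewrite mulr_sumr.
under eq_bigr do rewrite exchange_big.
rewrite sum_supported_pairs; under eq_bigr do rewrite sum_supported_pairs.
apply: eq_bigr => x _; apply: eq_bigr => y _.
by rewrite !merge_restrict !merge_id; ring.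
Qed.

Lemma parity_sign_flip_bit alpha i0 z :
  i0 \in alpha -> parity_sign alpha (flip_bit i0 z) = - parity_sign alpha z.
Proof.
move=> alpha_i0; rewrite /parity_sign !(bigD1 i0 alpha_i0) /= ffunE eqxx addbT.
rewrite (eq_bigr (fun i => (-1) ^+ z i)) => [|i /andP[_ ne_i_i0]]; last first.
  by rewrite flip_bit_neq.
by case: (z i0); rewrite /= ?expr0 ?expr1 ?mulN1r ?mul1r ?opprK.
Qed.

Lemma sum_parity_sign_eq0 (F : bits n -> C) alpha i0 :
  i0 \in alpha -> (forall z, F (flip_bit i0 z) = F z) ->
  \sum_z F z * parity_sign alpha z = 0.
Proof.
move=> alpha_i0 Fi0.
apply: (@sum_involution_eq0 _ _ _ (fun z => F z * parity_sign alpha z) (flip_bitK i0)) => z.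
by rewrite Fi0 parity_sign_flip_bit // mulrN.
Qed.

Lemma hweight_exprE m z :
  (hweight z)%:R ^+ m = \sum_(t : {ffun 'I_m -> 'I_n}) \prod_k (z (t k))%:R :> C.
Proof.
have -> : (hweight z)%:R = \sum_i (z i)%:R :> C.
  rewrite /hweight -sum1_card natr_sum big_mkcond.
  by apply: eq_bigr => i _; rewrite inE; case: (z i).
by rewrite -[in LHS](card_ord m) -prodr_const bigA_distr_bigA.
Qed.

Definition moment_coef m alpha : C :=
  2^-n * \sum_z (hweight z)%:R ^+ m * parity_sign alpha z.

Lemma moment_coef_real m alpha : moment_coef m alpha \is Num.real.
Proof.
rewrite rpredM ?rpredV ?rpredX ?realn // rpred_sum // => z _.
rewrite rpredM ?rpredX ?realn // rpred_prod // => i _.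
by rewrite rpredX ?rpredN ?real1.
Qed.

Lemma moment_coef_eq0 m alpha : (m < #|alpha|)%N -> moment_coef m alpha = 0.
Proof.
move=> lt_m_alpha; rewrite /moment_coef.
under eq_bigr do rewrite hweight_exprE mulr_suml.
rewrite exchange_big big1 ?mulr0 // => t _.
have [i0 alpha_i0 t'i0] : exists2 i0, i0 \in alpha & i0 \notin codom t.
  apply/subsetPn; apply: contraTN lt_m_alpha => /subset_leq_card le_alpha.
  by rewrite -leqNgt (leq_trans le_alpha) // (leq_trans (card_size _)) // size_codom card_ord.
apply: (sum_parity_sign_eq0 (fun z => \prod_k (z (t k))%:R) _ _ alpha_i0) => z.
apply: eq_bigr => k _.
by rewrite flip_bit_neq //; apply: contraNneq t'i0 => <-; exact: codom_f.
Qed.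

Lemma moment_expansion m psi :
  \sum_z (hweight z)%:R ^+ m * pswap psi z =
  \sum_alpha moment_coef m alpha * purity psi alpha.
Proof.
under eq_bigr do rewrite pswap_expansion !mulr_sumr.
rewrite exchange_big; apply: eq_bigr => alpha _.
rewrite -swap_expectation_purity /moment_coef -mulrA mulr_suml mulr_sumr.
by apply: eq_bigr => z _; ring.
Qed.

End TwoCopies.

Theorem mainTheorem16 (C : numClosedFieldType) (n m : nat) (hm : (0 < m)%N) :
  exists d : {set 'I_n} -> C,
    (forall alpha, d alpha \is Num.real) /\
    forall psi : qstate C n, normalized psi ->
      \sum_(z : bits n) (hweight z)%:R ^+ m * pswap psi z =
      \sum_(alpha : {set 'I_n} | (#|alpha| <= m)%N) d alpha * purity psi alpha.
Proof.
exists (moment_coef m); split=> [alpha | psi _]; first exact: moment_coef_real.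
rewrite moment_expansion (bigID (fun alpha : {set 'I_n} => #|alpha| <= m)%N) /=.
rewrite [X in _ + X]big1 ?addr0 // => alpha; rewrite -ltnNge => /moment_coef_eq0 ->.
exact: mul0r.
Qed.
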